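(* Let $(x_n)$ be generated by (HPPA). Let ${\rm a},{\rm E}:\mathbb{N}\to\mathbb{N}$ be monotone functions satisfying (Q1) and (Q4) respectively, and let $\mathcal{E},\mathcal{D}\in\mathbb{N}$ satisfy $\mathcal{E}\geq 1+\sum_{i=0}^{{\rm E}(0)}\|e_i\|$ and $\mathcal{D}\geq\|x_0-p\|$ for some $p\in S$. Define $\xi(k):=\max\{{\rm a}(2(2\mathcal{D}+\mathcal{E})(k+1)-1),\ {\rm E}(2k+1)+1\}$. Then $$\forall k\in\mathbb{N}\ \forall n\geq\xi(k)\ \left(\|x_{n+1}-J_{\beta_n}(x_n)\|\leq\frac{1}{k+1}\right).$$
   Context: $X$ is a real Hilbert space, $\mathsf{A}:X\to 2^X$ a maximal monotone operator with zero set $S=\{x:0\in\mathsf{A}(x)\}$, assumed nonempty. For $\beta>0$, $J_\beta:=(Id+\beta\mathsf{A})^{-1}$ is the resolvent, a single-valued nonexpansive map with fixed point set $S$. Given $(\alpha_n)\subset\,]0,1[$, $(\beta_n)\subset(0,\infty)$, $(e_n)\subset X$, $x_0\in X$, (HPPA) is the sequence $x_{n+1}:=\alpha_n x_0+(1-\alpha_n)(J_{\beta_n}(x_n)+e_n)$. (Q1): $\forall k\,\forall n\geq{\rm a}(k)\ \alpha_n\leq\frac{1}{k+1}$. (Q4): $\forall k\,\forall n\ \sum_{i={\rm E}(k)+1}^{{\rm E}(k)+n}\|e_i\|\leq\frac{1}{k+1}$. Monotone means nondecreasing. *)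

From Stdlib Require Import Reals Lra.
Open Scope R_scope.

Record HilbertSpace := {
  hcar :> Type;
  hzero : hcar;
  hadd : hcar -> hcar -> hcar;
  hopp : hcar -> hcar;
  hscal : R -> hcar -> hcar;
  hinner : hcar -> hcar -> R;
  hadd_assoc : forall x y z, hadd x (hadd y z) = hadd (hadd x y) z;
  hadd_comm : forall x y, hadd x y = hadd y x;
  hadd_zero : forall x, hadd hzero x = x;
  hadd_opp : forall x, hadd (hopp x) x = hzero;
  hscal_assoc : forall a b x, hscal a (hscal b x) = hscal (a * b) x;
  hscal_one : forall x, hscal 1 x = x;
  hscal_distr_v : forall a x y, hscal a (hadd x y) = hadd (hscal a x) (hscal a y);
  hscal_distr_s : forall a b x, hscal (a + b) x = hadd (hscal a x) (hscal b x);
  hinner_sym : forall x y, hinner x y = hinner y x;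
  hinner_add_l : forall x y z, hinner (hadd x y) z = hinner x z + hinner y z;
  hinner_scal_l : forall a x y, hinner (hscal a x) y = a * hinner x y;
  hinner_pos : forall x, 0 <= hinner x x;
  hinner_def : forall x, hinner x x = 0 -> x = hzero;
  hcomplete : forall u : nat -> hcar,
    (forall eps, 0 < eps -> exists N, forall m n, (N <= m)%nat -> (N <= n)%nat ->
        sqrt (hinner (hadd (u m) (hopp (u n))) (hadd (u m) (hopp (u n)))) < eps) ->
    exists l, forall eps, 0 < eps -> exists N, forall n, (N <= n)%nat ->
        sqrt (hinner (hadd (u n) (hopp l)) (hadd (u n) (hopp l))) < eps
}.

Arguments hzero {h}.
Arguments hadd {h} _ _.
Arguments hopp {h} _.
Arguments hscal {h} _ _.
Arguments hinner {h} _ _.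

Definition hsub {X : HilbertSpace} (x y : X) : X := hadd x (hopp y).
Definition hnorm {X : HilbertSpace} (x : X) : R := sqrt (hinner x x).

(* Set-valued operators A : X -> 2^X, represented by their graph: A x u means u ∈ A(x). *)
Definition monotone_op {X : HilbertSpace} (A : X -> X -> Prop) : Prop :=
  forall x y u v, A x u -> A y v -> 0 <= hinner (hsub x y) (hsub u v).

Definition maximal_monotone {X : HilbertSpace} (A : X -> X -> Prop) : Prop :=
  monotone_op A /\
  forall B : X -> X -> Prop, monotone_op B -> (forall x u, A x u -> B x u) ->
    forall x u, B x u -> A x u.

(* J is the resolvent (Id + beta A)^{-1}:  for every x,  x ∈ J x + beta A(J x). *)
Definition is_resolvent {X : HilbertSpace} (A : X -> X -> Prop) (beta : R) (J : X -> X) : Prop :=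
  forall x, A (J x) (hscal (/ beta) (hsub x (J x))).

Fixpoint sum_from (f : nat -> R) (m len : nat) : R :=
  match len with
  | O => 0
  | S l => f m + sum_from f (S m) l
  end.

Definition HPPA {X : HilbertSpace} (J : R -> X -> X) (alpha beta : nat -> R)
  (e : nat -> X) (x0 : X) (x : nat -> X) : Prop :=
  x O = x0 /\
  forall n, x (S n) = hadd (hscal (alpha n) x0)
                           (hscal (1 - alpha n) (hadd (J (beta n) (x n)) (e n))).

Definition nat_monotone (f : nat -> nat) : Prop := forall m n, (m <= n)%nat -> (f m <= f n)%nat.

(* The residual splits as x_{n+1} - J x_n = alpha_n (x_0 - J x_n) + (1 - alpha_n) e_n.
   A resolvent does not increase the distance to a zero p of A, so by induction
   ||x_n - p|| <= D + sum_{i<n} ||e_i|| <= D + E, hence ||x_0 - J x_n|| <= 2D + E.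
   For n >= xi(k), (Q1) makes the first term at most 1/(2(k+1)) and (Q4) bounds
   ||e_n|| by 1/(2(k+1)). *)
From Stdlib Require Import Reals Lra Lia.
Open Scope R_scope.

Section HilbertSpaceFacts.
Context {X : HilbertSpace}.

Lemma hinner_zero_l (z : X) : hinner hzero z = 0.
Proof.
  assert (H := hinner_add_l X hzero hzero z). rewrite hadd_zero in H. lra.
Qed.

Lemma hinner_opp_l (x z : X) : hinner (hopp x) z = - hinner x z.
Proof.
  assert (H := hinner_add_l X (hopp x) x z). rewrite hadd_opp, hinner_zero_l in H. lra.
Qed.

Lemma hinner_zero_r (z : X) : hinner z hzero = 0.
Proof. rewrite hinner_sym; apply hinner_zero_l. Qed.

Lemma hinner_opp_r (x z : X) : hinner z (hopp x) = - hinner z x.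
Proof. rewrite hinner_sym, hinner_opp_l, hinner_sym; reflexivity. Qed.

Lemma hinner_add_r (x y z : X) : hinner z (hadd x y) = hinner z x + hinner z y.
Proof. rewrite hinner_sym, hinner_add_l, (hinner_sym _ x), (hinner_sym _ y); reflexivity. Qed.

Lemma hinner_scal_r a (x y : X) : hinner y (hscal a x) = a * hinner y x.
Proof. rewrite hinner_sym, hinner_scal_l, hinner_sym; reflexivity. Qed.

Lemma hinner_ext_l (w w' : X) : (forall z, hinner w z = hinner w' z) -> w = w'.
Proof.
  intros H.
  assert (E : hinner (hsub w w') (hsub w w') = 0).
  { unfold hsub. rewrite hinner_add_l, hinner_opp_l, !H. lra. }
  apply hinner_def in E. unfold hsub in E.
  assert (T : hadd (hadd w (hopp w')) w' = w).
  { rewrite <- hadd_assoc, hadd_opp, hadd_comm, hadd_zero. reflexivity. }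
  rewrite E, hadd_zero in T. symmetry; exact T.
Qed.

Lemma hnorm_ge0 (u : X) : 0 <= hnorm u.
Proof. apply sqrt_pos. Qed.

Lemma hnorm_sqr (u : X) : hnorm u * hnorm u = hinner u u.
Proof. apply sqrt_sqrt, hinner_pos. Qed.

Lemma hnorm_scal a (u : X) : hnorm (hscal a u) = Rabs a * hnorm u.
Proof.
  unfold hnorm. rewrite hinner_scal_l, hinner_scal_r, <- Rmult_assoc.
  rewrite sqrt_mult; [| nra | apply hinner_pos].
  rewrite <- sqrt_Rsqr_abs. reflexivity.
Qed.

Lemma hinner_le_hnorm (u v : X) : hinner u v <= hnorm u * hnorm v.
Proof.
  set (a := hinner u u). set (b := hinner u v). set (c := hinner v v).
  assert (Ha : 0 <= a) by apply hinner_pos.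
  assert (Hc : 0 <= c) by apply hinner_pos.
  assert (Hbac : b * b <= a * c).
  { destruct (Req_dec c 0) as [Hc0|Hc0].
    - assert (v = hzero) by (apply hinner_def; exact Hc0).
      unfold b; subst v. rewrite hinner_zero_r. nra.
    - (* expand ||c u - b v||^2 >= 0 *)
      assert (P := hinner_pos X (hadd (hscal c u) (hopp (hscal b v)))).
      rewrite !hinner_add_l, !hinner_add_r, !hinner_opp_l, !hinner_opp_r,
        !hinner_scal_l, !hinner_scal_r, (hinner_sym _ v u) in P.
      fold a b c in P.
      assert (0 <= c * (a * c - b * b)) by nra.
      nra. }
  unfold hnorm. fold a c. rewrite <- sqrt_mult by lra.
  apply Rle_trans with (Rabs b); [apply Rle_abs |].
  rewrite <- sqrt_Rsqr_abs. apply sqrt_le_1_alt. unfold Rsqr. lra.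
Qed.

Lemma hnorm_add_le (u v : X) : hnorm (hadd u v) <= hnorm u + hnorm v.
Proof.
  assert (CS := hinner_le_hnorm u v).
  assert (Hu := hnorm_ge0 u). assert (Hv := hnorm_ge0 v).
  assert (Su := hnorm_sqr u). assert (Sv := hnorm_sqr v).
  assert (E : hinner (hadd u v) (hadd u v) = hinner u u + 2 * hinner u v + hinner v v).
  { rewrite !hinner_add_l, !hinner_add_r, (hinner_sym _ v u). ring. }
  unfold hnorm at 1. rewrite E.
  rewrite <- (sqrt_square (hnorm u + hnorm v)) by lra.
  apply sqrt_le_1_alt. nra.
Qed.

End HilbertSpaceFacts.

Ltac hvector_eq :=
  apply hinner_ext_l; intro; unfold hsub;
  repeat rewrite ?hinner_add_l, ?hinner_scal_l, ?hinner_opp_l; ring.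

Lemma hnorm_sub_triangle {X : HilbertSpace} (u v w : X) :
  hnorm (hsub u w) <= hnorm (hsub u v) + hnorm (hsub w v).
Proof.
  replace (hsub u w) with (hadd (hsub u v) (hscal (-1) (hsub w v))) by hvector_eq.
  eapply Rle_trans; [apply hnorm_add_le |].
  rewrite hnorm_scal, Rabs_left by lra. lra.
Qed.

Lemma resolvent_dist_zero_le {X : HilbertSpace} (A : X -> X -> Prop) b J p y :
  monotone_op A -> 0 < b -> is_resolvent A b J -> A p hzero ->
  hnorm (hsub (J y) p) <= hnorm (hsub y p).
Proof.
  intros Hmon Hb HJ Hp.
  assert (M := Hmon _ _ _ _ (HJ y) Hp).
  set (z := J y) in *.
  assert (Hbinv : 0 < / b) by (apply Rinv_0_lt_compat; exact Hb).
  assert (G : 0 <= hinner (hsub z p) (hsub y z)).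
  { unfold hsub in M |- *.
    rewrite !hinner_add_r, hinner_opp_r, hinner_zero_r, !hinner_scal_r,
      !hinner_add_r, hinner_opp_r in M.
    rewrite hinner_add_r, hinner_opp_r. nra. }
  assert (Split : hinner (hsub z p) (hsub z p)
                  = hinner (hsub z p) (hsub y p) - hinner (hsub z p) (hsub y z)).
  { unfold hsub. rewrite !hinner_add_r, !hinner_opp_r. ring. }
  assert (CS := hinner_le_hnorm (hsub z p) (hsub y p)).
  rewrite <- hnorm_sqr in Split.
  assert (N1 := hnorm_ge0 (hsub z p)). assert (N2 := hnorm_ge0 (hsub y p)).
  destruct (Req_dec (hnorm (hsub z p)) 0) as [Z | Z]; nra.
Qed.

Lemma sum_from_S f m l : sum_from f m (S l) = sum_from f m l + f (m + l)%nat.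
Proof.
  revert m; induction l as [| l IH]; intros m; simpl.
  - rewrite Nat.add_0_r; ring.
  - simpl in IH. rewrite IH. replace (S m + l)%nat with (m + S l)%nat by lia. ring.
Qed.

Lemma sum_from_app f m l1 l2 :
  sum_from f m (l1 + l2) = sum_from f m l1 + sum_from f (m + l1) l2.
Proof.
  revert m; induction l1 as [| l1 IH]; intros m; simpl.
  - rewrite Nat.add_0_r; ring.
  - rewrite IH. replace (S m + l1)%nat with (m + S l1)%nat by lia. ring.
Qed.

Section NonnegSums.
Variable f : nat -> R.
Hypothesis f_ge0 : forall i, 0 <= f i.

Lemma sum_from_ge0 m l : 0 <= sum_from f m l.
Proof.
  revert m; induction l as [| l IH]; intros m; simpl; [lra |].
  specialize (IH (S m)); specialize (f_ge0 m); lra.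
Qed.

Lemma sum_from_le_split m l1 l2 :
  sum_from f m l2 <= sum_from f m l1 + sum_from f (m + l1) l2.
Proof.
  rewrite <- sum_from_app, Nat.add_comm, sum_from_app.
  assert (H := sum_from_ge0 (m + l2) l1). lra.
Qed.

Lemma term_le_sum_from m n : (m <= n)%nat -> f n <= sum_from f m (n - m + 1).
Proof.
  intros Hmn. rewrite Nat.add_1_r, sum_from_S.
  replace (m + (n - m))%nat with n by lia.
  assert (H := sum_from_ge0 m (n - m)). lra.
Qed.

End NonnegSums.

Section HPPA_bounds.
Variables (X : HilbertSpace) (J : R -> X -> X) (alpha beta : nat -> R).
Variables (e : nat -> X) (x0 p : X) (x : nat -> X).
Hypothesis alpha_01 : forall n, 0 <= alpha n <= 1.
Hypothesis HPPA_x : HPPA J alpha beta e x0 x.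
Hypothesis J_dist_p : forall n y, hnorm (hsub (J (beta n) y) p) <= hnorm (hsub y p).

Let err_sum := sum_from (fun i => hnorm (e i)) 0.

Lemma HPPA_dist_zero_le n : hnorm (hsub (x n) p) <= hnorm (hsub x0 p) + err_sum n.
Proof.
  destruct HPPA_x as [Hx0 Hxs].
  induction n as [| n IH].
  - rewrite Hx0. unfold err_sum; simpl. lra.
  - unfold err_sum in *. rewrite sum_from_S; simpl Nat.add.
    replace (hsub (x (S n)) p) with
      (hadd (hscal (alpha n) (hsub x0 p))
            (hscal (1 - alpha n) (hadd (hsub (J (beta n) (x n)) p) (e n))))
      by (rewrite Hxs; hvector_eq).
    specialize (alpha_01 n). specialize (J_dist_p n (x n)).
    eapply Rle_trans; [apply hnorm_add_le |].
    rewrite !hnorm_scal, !Rabs_right by lra.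
    assert (T := hnorm_add_le (hsub (J (beta n) (x n)) p) (e n)).
    assert (S0 : 0 <= sum_from (fun i => hnorm (e i)) 0 n)
      by (apply sum_from_ge0; intro; apply hnorm_ge0).
    assert (N := hnorm_ge0 (hadd (hsub (J (beta n) (x n)) p) (e n))).
    assert (Ne := hnorm_ge0 (e n)). assert (N0 := hnorm_ge0 (hsub x0 p)).
    nra.
Qed.

Lemma HPPA_anchor_dist_le n :
  hnorm (hsub x0 (J (beta n) (x n))) <= 2 * hnorm (hsub x0 p) + err_sum n.
Proof.
  eapply Rle_trans; [apply (hnorm_sub_triangle _ p) |].
  assert (H1 := J_dist_p n (x n)). assert (H2 := HPPA_dist_zero_le n). lra.
Qed.

Lemma HPPA_residual_le n :
  hnorm (hsub (x (S n)) (J (beta n) (x n)))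
  <= alpha n * hnorm (hsub x0 (J (beta n) (x n))) + hnorm (e n).
Proof.
  destruct HPPA_x as [_ Hxs].
  replace (hsub (x (S n)) (J (beta n) (x n))) with
    (hadd (hscal (alpha n) (hsub x0 (J (beta n) (x n)))) (hscal (1 - alpha n) (e n)))
    by (rewrite Hxs; hvector_eq).
  specialize (alpha_01 n).
  eapply Rle_trans; [apply hnorm_add_le |].
  rewrite !hnorm_scal, !Rabs_right by lra.
  assert (Ne := hnorm_ge0 (e n)). nra.
Qed.

End HPPA_bounds.

Lemma INR_xi_index (d c k : nat) : (1 <= c)%nat ->
  INR (2 * (2 * d + c) * (k + 1) - 1) + 1 = 2 * (2 * INR d + INR c) * (INR k + 1).
Proof.
  intros Hc. rewrite minus_INR by (apply (Nat.mul_le_mono 1 _ 1); lia).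
  repeat rewrite ?mult_INR, ?plus_INR. simpl. ring.
Qed.

Lemma INR_double_succ (k : nat) : INR (2 * k + 1) + 1 = 2 * (INR k + 1).
Proof. rewrite plus_INR, mult_INR. simpl. ring. Qed.

Lemma split_budget (al t M u k : R) :
  0 <= al -> 0 <= k -> 0 < M -> 0 <= t <= M ->
  al <= 1 / (2 * M * (k + 1)) -> u <= 1 / (2 * (k + 1)) ->
  al * t + u <= 1 / (k + 1).
Proof.
  intros Hal Hk HM Ht Hal' Hu.
  assert (al * t <= al * M) by (apply Rmult_le_compat_l; lra).
  assert (al * M <= 1 / (2 * M * (k + 1)) * M) by (apply Rmult_le_compat_r; lra).
  replace (1 / (2 * M * (k + 1)) * M) with (1 / (2 * (k + 1))) in * by (field; lra).
  replace (1 / (k + 1)) with (1 / (2 * (k + 1)) + 1 / (2 * (k + 1))) by (field; lra).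
  lra.
Qed.

Theorem mainTheorem8
  (X : HilbertSpace) (A : X -> X -> Prop) (HA : maximal_monotone A)
  (J : R -> X -> X) (HJ : forall b, 0 < b -> is_resolvent A b (J b))
  (alpha beta : nat -> R) (e : nat -> X) (x0 : X) (x : nat -> X)
  (Halpha : forall n, 0 < alpha n < 1) (Hbeta : forall n, 0 < beta n)
  (Hx : HPPA J alpha beta e x0 x)
  (a E : nat -> nat) (Ha_mon : nat_monotone a) (HE_mon : nat_monotone E)
  (HQ1 : forall k n, (a k <= n)%nat -> alpha n <= 1 / (INR k + 1))
  (HQ4 : forall k n, sum_from (fun i => hnorm (e i)) (E k + 1) n <= 1 / (INR k + 1))
  (calE calD : nat)
  (HcalE : INR calE >= 1 + sum_from (fun i => hnorm (e i)) 0 (E 0%nat + 1))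
  (p : X) (Hp : A p hzero) (HcalD : INR calD >= hnorm (hsub x0 p)) :
  let xi := fun k : nat =>
    Nat.max (a (2 * (2 * calD + calE) * (k + 1) - 1)%nat) (E (2 * k + 1)%nat + 1)%nat in
  forall k n : nat, (xi k <= n)%nat ->
    hnorm (hsub (x (S n)) (J (beta n) (x n))) <= 1 / (INR k + 1).
Proof.
  intros xi k n Hn. unfold xi in Hn.
  set (f := fun i => hnorm (e i)) in *.
  assert (f_ge0 : forall i, 0 <= f i) by (intro; apply hnorm_ge0).
  assert (alpha_01 : forall m, 0 <= alpha m <= 1) by (intro m; specialize (Halpha m); lra).
  assert (C_ge1 : 1 <= INR calE) by (assert (H := sum_from_ge0 f f_ge0 0 (E 0%nat + 1)); lra).
  assert (J_dist_p : forall m y, hnorm (hsub (J (beta m) y) p) <= hnorm (hsub y p))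
    by (intros; eapply resolvent_dist_zero_le; eauto; apply HA).
  assert (Hsum : sum_from f 0 n <= INR calE).
  { assert (H1 := sum_from_le_split f f_ge0 0 (E 0%nat + 1) n).
    assert (H2 := HQ4 0%nat n). simpl in H1, H2. lra. }
  assert (Hanchor := HPPA_anchor_dist_le X J alpha beta e x0 p x alpha_01 Hx J_dist_p n).
  assert (Halpha_n := HQ1 _ n (Nat.max_lub_l _ _ _ Hn)).
  rewrite INR_xi_index in Halpha_n
    by (assert (1 <= calE)%nat by (apply INR_le; exact C_ge1); lia).
  assert (He_n : f n <= 1 / (2 * (INR k + 1))).
  { rewrite <- INR_double_succ.
    eapply Rle_trans; [apply (term_le_sum_from f f_ge0 (E (2 * k + 1)%nat + 1)); lia |].
    apply HQ4. }
  eapply Rle_trans; [apply (HPPA_residual_le X J alpha beta e x0 x alpha_01 Hx) |].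
  apply (split_budget _ _ (2 * INR calD + INR calE));
    [apply alpha_01 | apply pos_INR | | | exact Halpha_n | exact He_n].
  - assert (H := pos_INR calD). lra.
  - change (sum_from (fun i => hnorm (e i)) 0 n) with (sum_from f 0 n) in Hanchor.
    split; [apply hnorm_ge0 | lra].
Qed.
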